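(* Let $(G,\cdot,D,\star)$ be an invariant probabilistic metric group with identity $e$. Then $$Lip^1_\star(G,\Delta^+)=\{f:G\to\Delta^+\ :\ f\odot\delta_e=\delta_e\odot f=f\}.$$
   Context: A distribution function is a nondecreasing, left-continuous function $F:[-\infty,+\infty]\to[0,1]$ with $F(-\infty)=0$, $F(+\infty)=1$; $\Delta^+$ is the set of distribution functions with $F(0)=0$, ordered pointwise; $(\Delta^+,\le)$ is a complete lattice with maximum $\mathcal H_0$ ($\mathcal H_0(t)=0$ for $t\le0$, $1$ for $t>0$). A triangle function is a binary operation $\star$ on $\Delta^+$ that is commutative, associative, nondecreasing in each argument, with $F\star\mathcal H_0=F$. A probabilistic metric space $(G,D,\star)$ consists of a set $G$, a triangle function $\star$ and $D:G\times G\to\Delta^+$ with (i) $D(p,q)=\mathcal H_0$ iff $p=q$; (ii) $D(p,q)=D(q,p)$; (iii) $D(p,q)\star D(q,r)\le D(p,r)$. If moreover $(G,\cdot)$ is a group with identity $e$ and $D(pr,qr)=D(rp,rq)=D(p,q)$ for all $p,q,r$, then $(G,\cdot,D,\star)$ is an invariant probabilistic metric group. A map $f:G\to\Delta^+$ is probabilistic $1$-Lipschitz if $D(x,y)\star f(y)\le f(x)$ for all $x,y$; $Lip^1_\star(G,\Delta^+)$ is the set of such maps. $\delta_e(y)=D(y,e)$. For maps $f,g:G\to\Delta^+$, $(f\odot g)(x)=\sup_{y,z\in G,\ yz=x}f(y)\star g(z)$. *)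

From Stdlib Require Import Reals Lra.
Open Scope R_scope.

Inductive ER : Type := NInf | Fin (x : R) | PInf.

Definition ERle (a b : ER) : Prop :=
  match a, b with
  | NInf, _ => True
  | _, PInf => True
  | Fin x, Fin y => x <= y
  | _, _ => False
  end.

Definition is_distribution (F : ER -> R) : Prop :=
  (forall a, 0 <= F a <= 1) /\
  (forall a b, ERle a b -> F a <= F b) /\
  (forall x : R, forall eps, 0 < eps -> exists d, 0 < d /\
     forall y : R, x - d < y <= x -> Rabs (F (Fin y) - F (Fin x)) < eps) /\
  F NInf = 0 /\ F PInf = 1.

Definition is_DeltaPlus (F : ER -> R) : Prop :=
  is_distribution F /\ F (Fin 0) = 0.

Definition DeltaPlus : Type := { F : ER -> R | is_DeltaPlus F }.

Definition DPle (F G : DeltaPlus) : Prop :=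
  forall a, proj1_sig F a <= proj1_sig G a.

Definition H0fun (a : ER) : R :=
  match a with
  | NInf => 0
  | Fin t => if Rle_dec t 0 then 0 else 1
  | PInf => 1
  end.

Lemma H0_DeltaPlus : is_DeltaPlus H0fun.
Proof.
  split; [split; [|split; [|split]]|].
  - intros [|t|]; simpl; try lra. destruct (Rle_dec t 0); lra.
  - intros [|s|] [|t|]; simpl; intros H; try lra; try contradiction;
      repeat destruct (Rle_dec _ 0); lra.
  - intros x eps Heps. destruct (Rle_dec x 0) as [Hx|Hx].
    + exists 1; split; [lra|]. intros y Hy; simpl.
      destruct (Rle_dec y 0); destruct (Rle_dec x 0); try lra.
      replace (0-0) with 0 by lra. rewrite Rabs_R0; lra.
    + exists x; split; [lra|]. intros y Hy; simpl.
      destruct (Rle_dec y 0); destruct (Rle_dec x 0); try lra.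
      replace (1-1) with 0 by lra. rewrite Rabs_R0; lra.
  - split; reflexivity.
  - simpl. destruct (Rle_dec 0 0); [reflexivity| lra].
Qed.

Definition H0 : DeltaPlus := exist _ H0fun H0_DeltaPlus.

Definition is_triangle_function (star : DeltaPlus -> DeltaPlus -> DeltaPlus) : Prop :=
  (forall F G, star F G = star G F) /\
  (forall F G K, star F (star G K) = star (star F G) K) /\
  (forall F F' G, DPle F F' -> DPle (star F G) (star F' G)) /\
  (forall F G G', DPle G G' -> DPle (star F G) (star F G')) /\
  (forall F, star F H0 = F).

Definition is_group {G : Type} (mul : G -> G -> G) (inv : G -> G) (e : G) : Prop :=
  (forall x y z, mul x (mul y z) = mul (mul x y) z) /\
  (forall x, mul e x = x) /\ (forall x, mul x e = x) /\
  (forall x, mul (inv x) x = e) /\ (forall x, mul x (inv x) = e).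

Definition is_PM {G : Type} (D : G -> G -> DeltaPlus)
  (star : DeltaPlus -> DeltaPlus -> DeltaPlus) : Prop :=
  (forall p q, D p q = H0 <-> p = q) /\
  (forall p q, D p q = D q p) /\
  (forall p q r, DPle (star (D p q) (D q r)) (D p r)).

Definition is_invariant {G : Type} (mul : G -> G -> G) (D : G -> G -> DeltaPlus) : Prop :=
  forall p q r, D (mul p r) (mul q r) = D p q /\ D (mul r p) (mul r q) = D p q.

Definition Lip1 {G : Type} (star : DeltaPlus -> DeltaPlus -> DeltaPlus)
  (D : G -> G -> DeltaPlus) (f : G -> DeltaPlus) : Prop :=
  forall x y, DPle (star (D x y) (f y)) (f x).

Definition is_supDP (S : DeltaPlus -> Prop) (F : DeltaPlus) : Prop :=
  (forall K, S K -> DPle K F) /\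
  (forall U, (forall K, S K -> DPle K U) -> DPle F U).

(* "f (.) g = h": for every x, h x = sup_{y z = x} f y * g z in (Delta^+, <=). *)
Definition odot_eq {G : Type} (star : DeltaPlus -> DeltaPlus -> DeltaPlus)
  (mul : G -> G -> G) (f g h : G -> DeltaPlus) : Prop :=
  forall x, is_supDP (fun K => exists y z, mul y z = x /\ K = star (f y) (g z)) (h x).

From Stdlib Require Import Reals ssreflect.

(* By invariance, [D (y z) y = D z e] and [D (y z) z = D y e], so the terms of
   [f ⊙ δ_e] and [δ_e ⊙ f] at [x] are exactly the Lipschitz bounds
   [D x y ⋆ f y]; the choice [z = e] (resp. [y = e]) contributes [f x] itself,
   which is therefore the supremum.  Conversely, writing [x = (x y⁻¹) y] shows
   every Lipschitz bound occurs below the supremum [(δ_e ⊙ f)(x) = f x]. *)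

Lemma is_supDP_max (S : DeltaPlus -> Prop) (F : DeltaPlus) :
  S F -> (forall K, S K -> DPle K F) -> is_supDP S F.
Proof. by move=> SF ubF; split=> // U ubU; apply: ubU. Qed.

Section InvariantPM.

Context {G : Type} {mul : G -> G -> G} {inv : G -> G} {e : G}.
Context {star : DeltaPlus -> DeltaPlus -> DeltaPlus} {D : G -> G -> DeltaPlus}.

Hypothesis mulA : forall x y z, mul x (mul y z) = mul (mul x y) z.
Hypothesis mul1g : forall x, mul e x = x.
Hypothesis mulg1 : forall x, mul x e = x.
Hypothesis mulVg : forall x, mul (inv x) x = e.
Hypothesis starC : forall F K, star F K = star K F.
Hypothesis starH0 : forall F, star F H0 = F.
Hypothesis Dee : D e e = H0.
Hypothesis Dinv : is_invariant mul D.

Let delta_e (y : G) : DeltaPlus := D y e.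

Lemma D_mul_left_cancel y z : D (mul y z) y = D z e.
Proof. by have [_ <-] := Dinv z e y; rewrite mulg1. Qed.

Lemma D_mul_right_cancel y z : D (mul y z) z = D y e.
Proof. by have [<- _] := Dinv y e z; rewrite mul1g. Qed.

Variable f : G -> DeltaPlus.

Lemma odot_delta_r_of_Lip1 : Lip1 star D f -> odot_eq star mul f delta_e f.
Proof.
move=> Lf x; apply: is_supDP_max.
- by exists x, e; rewrite mulg1 /delta_e Dee starH0.
- move=> _ [y [z [<- ->]]].
  by rewrite starC /delta_e -(D_mul_left_cancel y); apply: Lf.
Qed.

Lemma odot_delta_l_of_Lip1 : Lip1 star D f -> odot_eq star mul delta_e f f.
Proof.
move=> Lf x; apply: is_supDP_max.
- by exists e, x; rewrite mul1g /delta_e Dee starC starH0.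
- by move=> _ [y [z [<- ->]]]; rewrite /delta_e -(D_mul_right_cancel y z); apply: Lf.
Qed.

Lemma Lip1_of_odot_delta_l : odot_eq star mul delta_e f f -> Lip1 star D f.
Proof.
move=> odot_f x y; have [ub _] := odot_f x; apply: ub.
have xVyy : mul (mul x (inv y)) y = x by rewrite -mulA mulVg mulg1.
exists (mul x (inv y)), y; split=> //.
by rewrite /delta_e -(D_mul_right_cancel _ y) xVyy.
Qed.

End InvariantPM.

Theorem proposition12 (G : Type) (mul : G -> G -> G) (inv : G -> G) (e : G)
  (star : DeltaPlus -> DeltaPlus -> DeltaPlus) (D : G -> G -> DeltaPlus)
  (HG : is_group mul inv e) (Hstar : is_triangle_function star)
  (HPM : is_PM D star) (Hinv : is_invariant mul D) :
  forall f : G -> DeltaPlus,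
    Lip1 star D f <->
    (odot_eq star mul f (fun y => D y e) f /\ odot_eq star mul (fun y => D y e) f f).
Proof.
have [mulA [mul1g [mulg1 [mulVg _]]]] := HG.
have [starC [_ [_ [_ starH0]]]] := Hstar.
have Dee : D e e = H0 by apply HPM.
move=> f; split.
- move=> Lf; split.
  + exact: odot_delta_r_of_Lip1 mulg1 starC starH0 Dee Hinv f Lf.
  + exact: odot_delta_l_of_Lip1 mul1g starC starH0 Dee Hinv f Lf.
- move=> [_ odot_l].
  exact: Lip1_of_odot_delta_l mulA mul1g mulg1 mulVg Hinv f odot_l.
Qed.
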